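(* Let $f:\mathbb{C}^2\to\mathbb{C}^2$ be a generically non-proper polynomial map with support $A=(A_1,A_2)$, and let $\Gamma$ be a right (respectively left) long origin relevant face of $A$. Then $A$ has no right (respectively left) relevant face other than $\Gamma$.
   Context: $A_i=\operatorname{supp}f_i$. A face of a finite set $S\subset\mathbb{Z}^2$ is the set of points of $S$ minimizing $\langle\alpha,\cdot\rangle$ for some $\alpha\in\mathbb{R}^2$ (which supports it); a face of $A$ is a pair $\Gamma=(\Gamma_1,\Gamma_2)$ with $\Gamma_i$ the face of $A_i$ supported by a common $\alpha$. $\Gamma$ is origin if $(0,0)\in\Gamma_1$ and $(0,0)\in\Gamma_2$; semi-origin if $(0,0)\in\Gamma_1\cup\Gamma_2$; coordinate if every vector supporting it has one coordinate positive and the other zero; relevant if it is semi-origin, not coordinate, and no $\Gamma_i$ is a single point different from $(0,0)$. Supporting vectors $\alpha=(\alpha_1,\alpha_2)$ of relevant faces satisfy $\alpha_1\alpha_2<0$; a relevant face is left if $\alpha_1>0$ and right if $\alpha_1<0$. A face is long if $\dim\mathrm{conv}(\Gamma_1)=\dim\mathrm{conv}(\Gamma_2)=1$. With $V(B_1,B_2):=\mathrm{Vol}(\mathrm{conv}B_1+\mathrm{conv}B_2)-\mathrm{Vol}(\mathrm{conv}B_1)-\mathrm{Vol}(\mathrm{conv}B_2)$ and $\Sigma$ the support of $|\mathrm{Jac} f|$, $f$ is generically non-proper if it is dominant, non-proper (some $y$, $x_k$ with $\|x_k\|\to\infty$, $f(x_k)\to y$), $f(0,0)\in(\mathbb{C}^*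 )^2$, and the systems $f_1=f_2=0$, $f_1=|\mathrm{Jac} f|=0$, $f_2=|\mathrm{Jac} f|=0$ have respectively $V(A_1,A_2)$, $V(A_1,\Sigma)$, $V(A_2,\Sigma)$ isolated solutions in $(\mathbb{C}^* )^2$ (counted with multiplicity). *)

(* Polynomials in two
   variables x, y over C are represented as {poly {poly C}}: the outer
   variable is y, the inner one is x. *)
From mathcomp Require Import all_boot all_order all_algebra.
From mathcomp Require Import complex.
From mathcomp Require Import all_classical all_reals all_analysis.
Set Implicit Arguments.
Unset Strict Implicit.
Unset Printing Implicit Defensive.
Import Order.TTheory GRing.Theory Num.Theory.
Local Open Scope ring_scope.
Local Open Scope classical_set_scope.

Section Defs.
Variable R : realType.
Local Notation C := (complex R).

Definition poly2 := {poly {poly C}}.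

Definition coef2 (p : poly2) (i j : nat) : C := (p`_j)`_i.

Definition supp2 (p : poly2) : set (nat * nat) :=
  [set ij | coef2 p ij.1 ij.2 != 0].

Definition ev2 (p : poly2) (z : C * C) : C :=
  (map_poly (fun q : {poly C} => q.[z.1]) p).[z.2].

Definition dx (p : poly2) : poly2 := map_poly (fun q : {poly C} => deriv q) p.
Definition dy (p : poly2) : poly2 := deriv p.
Definition jac (f1 f2 : poly2) : poly2 := dx f1 * dy f2 - dy f1 * dx f2.

Definition comp2 (h g1 g2 : poly2) : poly2 :=
  \sum_(j < size h) \sum_(i < size h`_j)
     (coef2 h i j)%:P%:P * g1 ^+ i * g2 ^+ j.

Definition shift2 (p : poly2) (z : C * C) : poly2 :=
  comp2 p ('X%:P + (z.1)%:P%:P) ('X + (z.2)%:P%:P).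

Definition mono2 (a b : nat) : poly2 := ('X^a)%:P * 'X^b.

(* Matrix of the truncations to total degree < N of the polynomials
   u^a v^b g_i (a,b < N), written in the local coordinates u = x - z1,
   v = y - z2, in the monomial basis u^c v^d (c + d < N) of
   C[u,v]/m^N.  Its rank is the dimension of the image of the ideal
   (g1,g2) in C[x,y]/m_z^N. *)
Definition trunc_mx (g1 g2 : poly2) (N : nat) :
  'M[C]_(#|{: 'I_N * 'I_N * bool}|, #|{: 'I_N * 'I_N}|) :=
  \matrix_(r < #|{: 'I_N * 'I_N * bool}|, c < #|{: 'I_N * 'I_N}|)
    (let abi : 'I_N * 'I_N * bool := enum_val r in
     let cd : 'I_N * 'I_N := enum_val c in
     if (cd.1 + cd.2 < N)%N then
       coef2 ((if abi.2 then g1 else g2) * mono2 abi.1.1 abi.1.2) cd.1 cd.2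
     else 0).

Definition local_dim (g1 g2 : poly2) (z : C * C) (N : nat) : nat :=
  (#|[set cd : 'I_N * 'I_N | (cd.1 + cd.2 < N)%N]|
     - \rank (trunc_mx (shift2 g1 z) (shift2 g2 z) N))%N.

(* m is the intersection multiplicity at z, i.e. dim_C of the local algebra
   C[x,y]_{m_z}/(g1,g2), which for an isolated zero equals the stable value
   of dim_C C[x,y]/((g1,g2) + m_z^N) for N large *)
Definition has_mult (g1 g2 : poly2) (z : C * C) (m : nat) : Prop :=
  exists N0, forall N, (N0 <= N)%N -> local_dim g1 g2 z N = m.

Definition common_zero (g1 g2 : poly2) (z : C * C) : Prop :=
  ev2 g1 z = 0 /\ ev2 g2 z = 0.

Definition in_torus (z : C * C) : Prop := z.1 != 0 /\ z.2 != 0.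

Definition isolated_zero (g1 g2 : poly2) (z : C * C) : Prop :=
  common_zero g1 g2 z /\
  exists eps : C, 0 < eps /\
    forall w, common_zero g1 g2 w ->
      `|w.1 - z.1| < eps -> `|w.2 - z.2| < eps -> w = z.

Definition n_isolated_sols (g1 g2 : poly2) (n : nat) : Prop :=
  exists s : seq (C * C),
    uniq s /\
    (forall z, z \in s <-> in_torus z /\ isolated_zero g1 g2 z) /\
    exists ms : seq nat,
      size ms = size s /\
      (forall k, (k < size s)%N -> has_mult g1 g2 (nth (0, 0) s k) (nth 0%N ms k)) /\
      sumn ms = n.

Definition conv (S : set (nat * nat)) : set (R * R) :=
  [set z | exists l : seq ((nat * nat) * R),
      (forall x, x \in l -> S x.1 /\ 0 <= x.2) /\
      \sum_(x <- l) x.2 = 1 /\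
      z = (\sum_(x <- l) x.2 * (x.1.1)%:R, \sum_(x <- l) x.2 * (x.1.2)%:R)].

Definition minkowski (A B : set (R * R)) : set (R * R) :=
  [set z | exists a b, A a /\ B b /\ z = (a.1 + b.1, a.2 + b.2)].

Definition vol (A : set (R * R)) : \bar R :=
  ((@lebesgue_measure R \x @lebesgue_measure R) A)%E.

Definition mixed_vol (B1 B2 : set (nat * nat)) : \bar R :=
  (vol (minkowski (conv B1) (conv B2)) - vol (conv B1) - vol (conv B2))%E.

Definition dotp (a : R * R) (s : nat * nat) : R := a.1 * (s.1)%:R + a.2 * (s.2)%:R.

Definition face (S : set (nat * nat)) (a : R * R) : set (nat * nat) :=
  [set s | S s /\ forall t, S t -> dotp a s <= dotp a t].

Definition supports (A1 A2 : set (nat * nat)) (a : R * R)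
  (G1 G2 : set (nat * nat)) : Prop := G1 = face A1 a /\ G2 = face A2 a.

Definition is_face A1 A2 (G1 G2 : set (nat * nat)) : Prop :=
  exists a, supports A1 A2 a G1 G2.

Definition origin_face (G1 G2 : set (nat * nat)) : Prop := G1 (0, 0)%N /\ G2 (0, 0)%N.
Definition semi_origin_face (G1 G2 : set (nat * nat)) : Prop := G1 (0, 0)%N \/ G2 (0, 0)%N.

Definition coordinate_face A1 A2 (G1 G2 : set (nat * nat)) : Prop :=
  forall a, supports A1 A2 a G1 G2 ->
    (0 < a.1 /\ a.2 = 0) \/ (a.1 = 0 /\ 0 < a.2).

Definition nonorigin_point (G : set (nat * nat)) : Prop :=
  exists p, p <> (0, 0)%N /\ G = [set p].

Definition relevant_face A1 A2 (G1 G2 : set (nat * nat)) : Prop :=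
  is_face A1 A2 G1 G2 /\ semi_origin_face G1 G2 /\
  ~ coordinate_face A1 A2 G1 G2 /\ ~ nonorigin_point G1 /\ ~ nonorigin_point G2.

Definition left_face A1 A2 (G1 G2 : set (nat * nat)) : Prop :=
  relevant_face A1 A2 G1 G2 /\
  forall a, supports A1 A2 a G1 G2 -> 0 < a.1 /\ a.2 < 0.

Definition right_face A1 A2 (G1 G2 : set (nat * nat)) : Prop :=
  relevant_face A1 A2 G1 G2 /\
  forall a, supports A1 A2 a G1 G2 -> a.1 < 0 /\ 0 < a.2.

(* dim conv(G) = 1: at least two distinct points, all collinear *)
Definition dim1 (G : set (nat * nat)) : Prop :=
  exists p q, G p /\ G q /\ p <> q /\
    forall r, G r ->
      ((r.1%:Z - p.1%:Z) * (q.2%:Z - p.2%:Z) = (r.2%:Z - p.2%:Z) * (q.1%:Z - p.1%:Z))%R.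

Definition long_face (G1 G2 : set (nat * nat)) : Prop := dim1 G1 /\ dim1 G2.

Definition dominant (f1 f2 : poly2) : Prop :=
  forall h : poly2, h != 0 -> exists z, ev2 h (ev2 f1 z, ev2 f2 z) != 0.

Definition non_proper (f1 f2 : poly2) : Prop :=
  exists (y : C * C) (xs : nat -> C * C),
    (forall M : nat, exists K, forall k, (K <= k)%N ->
        M%:R < `|(xs k).1| + `|(xs k).2|) /\
    (forall eps : C, 0 < eps -> exists K, forall k, (K <= k)%N ->
        `|ev2 f1 (xs k) - y.1| + `|ev2 f2 (xs k) - y.2| < eps).

Definition count_is_mixed_vol (g1 g2 : poly2) (B1 B2 : set (nat * nat)) : Prop :=
  exists n : nat, n_isolated_sols g1 g2 n /\ ((n%:R)%:E = mixed_vol B1 B2)%E.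

Definition generically_non_proper (f1 f2 : poly2) : Prop :=
  dominant f1 f2 /\ non_proper f1 f2 /\
  in_torus (ev2 f1 (0, 0), ev2 f2 (0, 0)) /\
  count_is_mixed_vol f1 f2 (supp2 f1) (supp2 f2) /\
  count_is_mixed_vol f1 (jac f1 f2) (supp2 f1) (supp2 (jac f1 f2)) /\
  count_is_mixed_vol f2 (jac f1 f2) (supp2 f2) (supp2 (jac f1 f2)).

End Defs.

(* Let a support the long origin face G and b another relevant face H on the
   same side, so that a.2 b.2 > 0.  Each A_i lies in the half-plane
   <a, .> >= 0 and meets the line <a, .> = 0 in a point r_i <> 0, with
   r_i.1 > 0.  The identity
     a.2^2 <b, p> = a.2 b.2 <a, p> - a.2 det(a, b) p.1
   compares b with a on A_i.  If a.2 det(a, b) > 0, then <b, r_i> < 0 and the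
   origin lies in neither face of H, although H is semi-origin.  If
   a.2 det(a, b) < 0, then b is positive on A_i minus the origin, so H is the
   vertex at the origin, which (1, 1) also supports, against the side
   condition.  Hence det(a, b) = 0, b is a positive multiple of a, and H = G. *)
From mathcomp Require Import all_boot all_order all_algebra.
From mathcomp Require Import complex.
From mathcomp Require Import all_classical all_reals all_analysis.
From mathcomp Require Import ring.
Import Order.TTheory GRing.Theory Num.Theory.
Local Open Scope ring_scope.
Local Open Scope classical_set_scope.

Set Implicit Arguments.
Unset Strict Implicit.
Unset Printing Implicit Defensive.

Lemma pair_neq0 (p : nat * nat) :
  p <> (0, 0)%N -> (0 < p.1)%N \/ (p.1 = 0 /\ 0 < p.2)%N.
Proof.
by case: p => [[|i] [|j]] //= _; [right | left | left].
Qed.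

Section Faces.
Variable R : realType.
Implicit Types (A : set (nat * nat)) (a b g : R * R) (p r : nat * nat).

Definition det2 a b : R := a.1 * b.2 - a.2 * b.1.

Lemma mul_gt0_neq0l (x y : R) : 0 < x * y -> x != 0.
Proof. by apply: contraTneq => ->; rewrite mul0r ltxx. Qed.

Lemma sqr_gt0 (x : R) : x != 0 -> 0 < x ^+ 2.
Proof. by move=> x_neq0; rewrite exprn_even_gt0 //= x_neq0. Qed.

Lemma dotp0 a : dotp a (0, 0)%N = 0.
Proof. by rewrite /dotp !mulr0 addr0. Qed.

Lemma dotp_fst0 a p : p.1 = 0%N -> dotp a p = a.2 * p.2%:R.
Proof. by rewrite /dotp => ->; rewrite mulr0 add0r. Qed.

Lemma sqr_dotp_decomp a b p :
  a.2 ^+ 2 * dotp b p = a.2 * b.2 * dotp a p - a.2 * det2 a b * p.1%:R.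
Proof. by rewrite /dotp /det2; ring. Qed.

Lemma face_scale A a t : 0 < t -> face A (t * a.1, t * a.2) = face A a.
Proof.
move=> t_gt0; apply/seteqP; split => s /= [As s_min]; split => // u /s_min;
  by rewrite /dotp /= -!mulrA -!mulrDr (ler_pM2l t_gt0).
Qed.

Lemma face_origin_ge0 A a p : face A a (0, 0)%N -> A p -> 0 <= dotp a p.
Proof. by move=> [_ min0] /min0; rewrite dotp0. Qed.

Lemma face_origin_eq0 A a r : face A a (0, 0)%N -> face A a r -> dotp a r = 0.
Proof.
move=> A0 [Ar r_min]; apply/eqP; rewrite eq_le (face_origin_ge0 A0 Ar) andbT.
by have := r_min _ A0.1; rewrite dotp0.
Qed.

Lemma face_eq_origin A g :
  A (0, 0)%N -> (forall p, A p -> p <> (0, 0)%N -> 0 < dotp g p) ->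
  face A g = [set (0, 0)%N].
Proof.
move=> A0 g_pos; apply/seteqP; split => [s [As s_min] | _ ->] /=.
  apply: contrapT => /(g_pos _ As) gs.
  by have := s_min _ A0; rewrite dotp0 leNgt gs.
split=> // p Ap; rewrite dotp0.
by have [->|/eqP/(g_pos _ Ap)/ltW] := eqVneq p (0, 0)%N; rewrite ?dotp0.
Qed.

Lemma face_ones A : A (0, 0)%N -> face A ((1, 1) : R * R) = [set (0, 0)%N].
Proof.
move=> A0; apply: face_eq_origin => // p _ /pair_neq0.
by rewrite /dotp !mul1r -natrD ltr0n addn_gt0 => -[-> | [_ ->]]; rewrite ?orbT.
Qed.

Lemma face_parallel A a b :
  0 < a.2 * b.2 -> det2 a b = 0 -> face A b = face A a.
Proof.
move=> ab /eqP; rewrite subr_eq0 => /eqP det0.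
have a2 := mul_gt0_neq0l ab.
have t_gt0 : 0 < b.2 / a.2.
  have -> : b.2 / a.2 = a.2 * b.2 / a.2 ^+ 2 by field.
  by rewrite divr_gt0 // sqr_gt0.
rewrite -(face_scale A a t_gt0); congr face.
case: b det0 {ab t_gt0} => b1 b2 /= det0; congr (_, _); last by rewrite divfK.
by apply: (mulfI a2); rewrite -det0; field.
Qed.

Section Compare.
Variables (A : set (nat * nat)) (a b : R * R).
Hypotheses (ab : 0 < a.2 * b.2) (A0 : face A a (0, 0)%N).

Let a2_neq0 : a.2 != 0 := mul_gt0_neq0l ab.
Let a2sq_gt0 : 0 < a.2 ^+ 2 := sqr_gt0 a2_neq0.

Lemma face_origin_fst_gt0 r : face A a r -> r <> (0, 0)%N -> 0 < r.1%:R :> R.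
Proof.
move=> Ar /pair_neq0 [r1 | [r1 r2]]; first by rewrite ltr0n.
move: (face_origin_eq0 A0 Ar); rewrite dotp_fst0 // => /eqP.
by rewrite mulf_eq0 (negPf a2_neq0) pnatr_eq0 /= eqn0Ngt r2.
Qed.

Lemma face_notin_origin_of_det2_gt0 r :
  face A a r -> r <> (0, 0)%N -> 0 < a.2 * det2 a b -> ~ face A b (0, 0)%N.
Proof.
move=> Ar r_neq0 det_gt0 [_ /(_ r Ar.1)]; rewrite dotp0 leNgt => /negP; apply.
rewrite -(pmulr_rlt0 _ a2sq_gt0) sqr_dotp_decomp (face_origin_eq0 A0 Ar) mulr0 add0r.
by rewrite oppr_lt0 mulr_gt0 // face_origin_fst_gt0.
Qed.

Lemma face_eq_origin_of_det2_lt0 :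
  a.2 * det2 a b < 0 -> face A b = [set (0, 0)%N].
Proof.
move=> det_lt0; apply: face_eq_origin => [|p Ap /pair_neq0 p_neq0]; first by case: A0.
have ap := face_origin_ge0 A0 Ap.
rewrite -(pmulr_rgt0 _ a2sq_gt0) sqr_dotp_decomp.
have [p1 | [p1 p2]] := p_neq0.
  apply: ltr_wpDl; first by rewrite mulr_ge0 // ltW.
  by rewrite oppr_gt0 pmulr_llt0 // ltr0n.
have ap_gt0 : 0 < dotp a p.
  by rewrite lt0r ap andbT dotp_fst0 // mulf_neq0 // pnatr_eq0 -lt0n.
by rewrite p1 mulr0 subr0 mulr_gt0.
Qed.

End Compare.

Lemma dim1_neq0 (G : set (nat * nat)) :
  dim1 G -> exists2 r, G r & r <> (0, 0)%N.
Proof.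
move=> [p [q [Gp [Gq [pq _]]]]].
have [p0|/eqP p_neq0] := eqVneq p (0, 0)%N; last by exists p.
by exists q => // q0; apply: pq; rewrite p0 q0.
Qed.

Lemma long_origin_face_unique A1 A2 a b G1 G2 H1 H2 :
  supports A1 A2 a G1 G2 -> supports A1 A2 b H1 H2 ->
  long_face G1 G2 -> origin_face G1 G2 -> 0 < a.2 * b.2 ->
  semi_origin_face H1 H2 -> ~ supports A1 A2 ((1, 1) : R * R) H1 H2 ->
  H1 = G1 /\ H2 = G2.
Proof.
move=> [-> ->] [-> ->] [/dim1_neq0 [r1 G1r r1_neq0] /dim1_neq0 [r2 G2r r2_neq0]].
move=> [G10 G20] ab H0 not_ones.
have [det_lt0 | det_gt0 | /eqP det0] := ltgtP (a.2 * det2 a b) 0.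
- case: not_ones; split.
  + by rewrite (face_eq_origin_of_det2_lt0 ab G10 det_lt0) face_ones //; case: G10.
  + by rewrite (face_eq_origin_of_det2_lt0 ab G20 det_lt0) face_ones //; case: G20.
- by case: H0; [move/(face_notin_origin_of_det2_gt0 ab G10 G1r r1_neq0 det_gt0) |
                 move/(face_notin_origin_of_det2_gt0 ab G20 G2r r2_neq0 det_gt0)].
- move: det0; rewrite mulf_eq0 (negPf (mul_gt0_neq0l ab)) => /eqP det0.
  by rewrite !(face_parallel _ ab det0).
Qed.

Lemma relevant_face_same_side_unique A1 A2 (side : R * R -> Prop) G1 G2 H1 H2 :
  (forall a b, side a -> side b -> 0 < a.2 * b.2) -> ~ side (1, 1) ->
  long_face G1 G2 -> origin_face G1 G2 ->
  is_face R A1 A2 G1 G2 -> (forall a, supports A1 A2 a G1 G2 -> side a) ->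
  is_face R A1 A2 H1 H2 -> semi_origin_face H1 H2 ->
  (forall b, supports A1 A2 b H1 H2 -> side b) ->
  H1 = G1 /\ H2 = G2.
Proof.
move=> same_sign not_ones lG oG [a sa] sideG [b sb] sH sideH.
apply: (long_origin_face_unique sa sb lG oG) => //.
- exact: same_sign (sideG _ sa) (sideH _ sb).
- by move/sideH.
Qed.

End Faces.

Theorem lemma7p1 (R : realType) (f1 f2 : poly2 R) :
  generically_non_proper f1 f2 ->
  forall G1 G2 : set (nat * nat),
    long_face G1 G2 -> origin_face G1 G2 ->
    (right_face R (supp2 f1) (supp2 f2) G1 G2 ->
       forall H1 H2, right_face R (supp2 f1) (supp2 f2) H1 H2 -> H1 = G1 /\ H2 = G2) /\
    (left_face R (supp2 f1) (supp2 f2) G1 G2 ->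
       forall H1 H2, left_face R (supp2 f1) (supp2 f2) H1 H2 -> H1 = G1 /\ H2 = G2).
Proof.
move=> _ G1 G2 lG oG; split => -[[fG _] sideG] H1 H2 [[fH [sH _]] sideH].
- apply: (relevant_face_same_side_unique (side := fun a : R * R => a.1 < 0 /\ 0 < a.2))
    lG oG fG sideG fH sH sideH.
  + by move=> a b [_ a2] [_ b2]; rewrite mulr_gt0.
  + by case; rewrite ltr10.
- apply: (relevant_face_same_side_unique (side := fun a : R * R => 0 < a.1 /\ a.2 < 0))
    lG oG fG sideG fH sH sideH.
  + by move=> a b [_ a2] [_ b2]; rewrite nmulr_rgt0.
  + by case=> _; rewrite ltr10.
Qed.
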